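(* Let $\Omega$ be a weighted clone. Then $\mathrm{supp}(\Omega)$ is a clone.
   Context: $D$ is a fixed finite set with $|D|\ge2$. A $k$-ary operation is $f:D^k\to D$; $\mathbf{O}^{(k)}_D$ is the set of $k$-ary operations. Projections: $e^{(k)}_i(x_1,\dots,x_k)=x_i$; $\mathbf{J}_D$ is the set of all projections, $\mathbf{J}_D^{(k)}$ the $k$-ary ones. Superposition of operations: $f[g_1,\dots,g_k](\mathbf{x})=f(g_1(\mathbf{x}),\dots,g_k(\mathbf{x}))$. A clone is a set of operations containing all projections and closed under superposition. A $k$-ary weighting is a function $\omega:\mathbf{O}^{(k)}_D\to\mathbb{R}$ with $\sum_f\omega(f)=0$ and $\omega(f)<0$ only if $f$ is a projection. $\mathrm{supp}(\omega)=\mathbf{J}_D^{(k)}\cup\{f:\omega(f)>0\}$, and for a non-empty set $\Omega$ of weightings, $\mathrm{supp}(\Omega)=\mathbf{J}_D\cup\bigcup_{\omega\in\Omega}\mathrm{supp}(\omega)$. For $\omega:\mathbf{O}^{(k)}_D\to\mathbb{R}$ and $\ell$-ary $g_1,\dots,g_k$, the superposition $\omega[g_1,\dots,g_k]:\mathbf{O}^{(\ell)}_D\to\mathbb{R}$ is $\omega[g_1,\dots,g_k](f')=\sum_{f:f[g_1,\dots,g_k]=f'}\omega(f)$; it is proper if it is a weighting. Topology: $k$-ary weightings lie in $\mathbb{R}^{\mathbf{O}^{(k)}_D}$ (Euclidean topology), with disjoint union topology over $k$. A weighted clone is a non-empty set $\Omega$ of weightings closed under scaling by non-negative reals, addition of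 weightings of equal arity, and proper superposition with operations from $\mathrm{supp}(\Omega)$, and topologically closed. *)

From HB Require Import structures.
From mathcomp Require Import all_boot all_order all_algebra.
From mathcomp Require Import Rstruct.
From Stdlib Require Import Rdefinitions.
Set Implicit Arguments. Unset Strict Implicit. Unset Printing Implicit Defensive.
Import Order.TTheory GRing.Theory Num.Theory.
Local Open Scope ring_scope.

Section WeightedClones.
Variable D : finType.

Definition cube (k : nat) := {ffun 'I_k -> D}.
Definition op (k : nat) := {ffun cube k -> D}.

Definition proj (k : nat) (i : 'I_k) : op k := [ffun x : cube k => x i].
Definition is_proj (k : nat) (f : op k) : Prop := exists i : 'I_k, f = proj i.

Definition superpos (k l : nat) (f : op k) (g : 'I_k -> op l) : op l :=
  [ffun x : cube l => f [ffun i : 'I_k => g i x]].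

Definition opset := forall k : nat, op k -> Prop.

Definition is_clone (C : opset) : Prop :=
  (forall k (i : 'I_k), C k (proj i)) /\
  (forall k l (f : op k) (g : 'I_k -> op l),
      C k f -> (forall i, C l (g i)) -> C l (superpos f g)).

Definition is_weighting (k : nat) (w : op k -> R) : Prop :=
  (\sum_(f : op k) w f = 0) /\ (forall f : op k, w f < 0 -> is_proj f).

Definition wset := forall k : nat, (op k -> R) -> Prop.

Definition supp (W : wset) : opset :=
  fun k f => is_proj f \/ exists w, W k w /\ 0 < w f.

Definition wsuperpos (k l : nat) (w : op k -> R) (g : 'I_k -> op l) : op l -> R :=
  fun f' => \sum_(f : op k | superpos f g == f') w f.

(* topological closedness in the disjoint union of the Euclidean spaces
   R^{O^(k)}: each arity component is closed; written out with the
   (equivalent, finite-dimensional) sup-norm. *)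
Definition wclosed (W : wset) : Prop :=
  forall k (w : op k -> R),
    (forall e : R, 0 < e -> exists w', W k w' /\ forall f, `|w f - w' f| < e) ->
    W k w.

Definition is_weighted_clone (W : wset) : Prop :=
  (exists k w, W k w) /\
  (forall k w, W k w -> is_weighting w) /\
  [/\
      (forall k w (c : R), W k w -> 0 <= c -> W k (fun f => c * w f)),
      (forall k w1 w2, W k w1 -> W k w2 -> W k (fun f => w1 f + w2 f)),
      (forall k l (w : op k -> R) (g : 'I_k -> op l),
          W k w -> (forall i, supp W (g i)) ->
          is_weighting (wsuperpos w g) -> W l (wsuperpos w g))
    & wclosed W].

End WeightedClones.

(* If w is a weighting of Omega with w(f) > 0 and g_1, ..., g_k lie in supp(Omega),
   the superposition w[g] need not be proper: it may be negative at those g_i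
   that are not projections.  Adding to it a combination rho of weightings of
   Omega that is larger than the l1-norm of w at each such g_i repairs this, and
   the sum w[g] + rho is still obtained from Omega, as the superposition of the
   (k+l)-ary weighting w[e_1..e_k] + rho[e_(k+1)..e_(k+l)] with the operations
   g_1, ..., g_k, e_1, ..., e_l.  Since rho is non-negative off the projections,
   w[g] + rho is a weighting of Omega which is positive at f[g]. *)
From mathcomp Require Import all_boot all_order all_algebra.
From mathcomp Require Import Rstruct.
From Stdlib Require Import Rdefinitions.
From Stdlib Require Import Classical FunctionalExtensionality.
From mathcomp Require Import lra.
Set Implicit Arguments. Unset Strict Implicit. Unset Printing Implicit Defensive.
Import Order.TTheory GRing.Theory Num.Theory.

Section Superposition.
Local Open Scope ring_scope.
Variable D : finType.

Lemma superposA k l m (f : op D k) (a : 'I_k -> op D l) (b : 'I_l -> op D m) :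
  superpos (superpos f a) b = superpos f (fun i => superpos (a i) b).
Proof.
by apply/ffunP => x; rewrite !ffunE; congr (f _); apply/ffunP => i; rewrite !ffunE.
Qed.

Lemma superpos_proj k l (j : 'I_k) (g : 'I_k -> op D l) :
  superpos (proj D j) g = g j.
Proof. by apply/ffunP => x; rewrite !ffunE. Qed.

Lemma superpos_id k (f : op D k) : superpos f (fun j => proj D j) = f.
Proof.
by apply/ffunP => x; rewrite !ffunE; congr (f _); apply/ffunP => i; rewrite !ffunE.
Qed.

Lemma superpos_not_proj k l (f : op D k) (g : 'I_k -> op D l) :
  (forall j, superpos f g <> g j) -> ~ is_proj f.
Proof. by move=> Hg [j Ef]; apply: (Hg j); rewrite Ef superpos_proj. Qed.

Lemma sum_wsuperpos k l (w : op D k -> R) (g : 'I_k -> op D l) :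
  \sum_(f' : op D l) wsuperpos w g f' = \sum_(f : op D k) w f.
Proof. by rewrite (partition_big (fun f => superpos f g) xpredT). Qed.

Lemma wsuperposA k l m (w : op D k -> R) (a : 'I_k -> op D l) (b : 'I_l -> op D m) :
  wsuperpos (wsuperpos w a) b = wsuperpos w (fun i => superpos (a i) b).
Proof.
apply: functional_extensionality => f''; rewrite /wsuperpos.
under [RHS]eq_bigl => f do rewrite -superposA.
rewrite (partition_big (fun f => superpos f a) (fun f' => superpos f' b == f'')) //.
apply: eq_bigr => f' /eqP Ef'; apply: eq_bigl => f.
by case: eqP => [->|]; rewrite ?andbF // Ef' eqxx.
Qed.

Lemma wsuperpos_id k (w : op D k -> R) : wsuperpos w (fun j => proj D j) = w.
Proof.
apply: functional_extensionality => f'; rewrite /wsuperpos.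
by under eq_bigl => f do rewrite superpos_id; rewrite big_pred1_eq.
Qed.

Lemma wsuperposD k l (a b : op D k -> R) (g : 'I_k -> op D l) :
  wsuperpos (fun x => a x + b x) g = fun y => wsuperpos a g y + wsuperpos b g y.
Proof. by apply: functional_extensionality => y; rewrite /wsuperpos big_split. Qed.

Lemma wsuperposZ k l (c : R) (a : op D k -> R) (g : 'I_k -> op D l) :
  wsuperpos (fun x => c * a x) g = fun y => c * wsuperpos a g y.
Proof. by apply: functional_extensionality => y; rewrite /wsuperpos mulr_sumr. Qed.

Lemma wsuperpos0 k l (g : 'I_k -> op D l) :
  wsuperpos (fun _ : op D k => 0) g = fun _ => 0.
Proof. by apply: functional_extensionality => y; rewrite /wsuperpos big1. Qed.

Lemma weighting_ge0 k (w : op D k -> R) (f : op D k) :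
  is_weighting w -> ~ is_proj f -> 0 <= w f.
Proof. by move=> [_ Hneg] Hf; rewrite leNgt; apply/negP => /Hneg. Qed.

Lemma wsuperpos_ge0 k l (w : op D k -> R) (g : 'I_k -> op D l) y :
  is_weighting w -> (forall j, y <> g j) -> 0 <= wsuperpos w g y.
Proof.
move=> Hw Hy; apply: sumr_ge0 => f /eqP Ef.
by apply: weighting_ge0 => //; apply: (@superpos_not_proj _ _ _ g) => j; rewrite Ef.
Qed.

Lemma wsuperpos_ge k l (w : op D k -> R) (g : 'I_k -> op D l) (f : op D k) :
  is_weighting w -> (forall j, superpos f g <> g j) ->
  w f <= wsuperpos w g (superpos f g).
Proof.
move=> Hw Hfg; rewrite /wsuperpos (bigD1 f) //= lerDl.
apply: sumr_ge0 => f0 /andP[/eqP Ef0 _].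
by apply: weighting_ge0 => //; apply: (@superpos_not_proj _ _ _ g) => j; rewrite Ef0.
Qed.

Lemma wsuperpos_ge_norm k l (w : op D k -> R) (g : 'I_k -> op D l) y :
  - (\sum_(f : op D k) `|w f|) <= wsuperpos w g y.
Proof.
suff: `|wsuperpos w g y| <= \sum_(f : op D k) `|w f| by rewrite ler_norml => /andP[].
apply: le_trans (ler_norm_sum _ _ _) _.
by rewrite [leRHS](bigID (fun f => superpos f g == y)) lerDl sumr_ge0.
Qed.

Lemma weighting_wsuperpos_proj k l (w : op D k -> R) (g : 'I_k -> op D l) :
  is_weighting w -> (forall i, is_proj (g i)) -> is_weighting (wsuperpos w g).
Proof.
move=> Hw Hg; split; first by rewrite sum_wsuperpos; exact: Hw.1.
move=> y Hy; apply: NNPP => Hny.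
have [j Ey] : exists j, y = g j.
  apply: NNPP => Hrange; move: Hy; rewrite ltNge wsuperpos_ge0 // => j Ey.
  by apply: Hrange; exists j.
by apply: Hny; rewrite Ey.
Qed.

Section Domination.
Variables (k l : nat) (w : op D k -> R) (g : 'I_k -> op D l) (rho : op D l -> R).
Hypotheses (Hw : is_weighting w) (Hrho : forall y, ~ is_proj y -> 0 <= rho y).
Hypothesis Hdom :
  forall i, ~ is_proj (g i) -> \sum_(f : op D k) `|w f| < rho (g i).

Lemma dominated_wsuperpos_gt0 j :
  ~ is_proj (g j) -> 0 < wsuperpos w g (g j) + rho (g j).
Proof. by move=> /Hdom; have := wsuperpos_ge_norm w g (g j); lra. Qed.

Lemma dominated_wsuperpos_weighting :
  \sum_(f : op D l) rho f = 0 -> is_weighting (fun y => wsuperpos w g y + rho y).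
Proof.
move=> Hrho0; split; first by rewrite big_split /= sum_wsuperpos Hrho0 Hw.1 addr0.
move=> y Hlt; apply: NNPP => Hy.
have [[j Ey]|Hrange] := classic (exists j, y = g j).
  by move: Hlt; rewrite Ey ltNge ltW // dominated_wsuperpos_gt0 // -Ey.
have := Hrho Hy; have : 0 <= wsuperpos w g y.
  by apply: wsuperpos_ge0 => // j Ey; apply: Hrange; exists j.
lra.
Qed.

Lemma dominated_wsuperpos_pos (f : op D k) : 0 < w f -> ~ is_proj (superpos f g) ->
  0 < wsuperpos w g (superpos f g) + rho (superpos f g).
Proof.
move=> Hf Hfg; have [[j Ej]|Hrange] := classic (exists j, superpos f g = g j).
  by rewrite Ej; apply: dominated_wsuperpos_gt0; rewrite -Ej.
have := Hrho Hfg; have : w f <= wsuperpos w g (superpos f g).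
  by apply: wsuperpos_ge => // j Ej; apply: Hrange; exists j.
lra.
Qed.

End Domination.

Section WeightedClone.
Variable W : wset D.
Arguments W : clear implicits.
Hypothesis W_weighting : forall k w, W k w -> is_weighting w.
Hypothesis W_scale : forall k w (c : R), W k w -> 0 <= c -> W k (fun f => c * w f).
Hypothesis W_add : forall k w1 w2, W k w1 -> W k w2 -> W k (fun f => w1 f + w2 f).
Hypothesis W_superpos : forall k l (w : op D k -> R) (g : 'I_k -> op D l),
  W k w -> (forall i, supp W (g i)) ->
  is_weighting (wsuperpos w g) -> W l (wsuperpos w g).

Lemma W_wsuperpos_proj m n (u : op D m -> R) (a : 'I_m -> op D n) :
  W m u -> (forall i, is_proj (a i)) -> W n (wsuperpos u a).
Proof.
move=> Wu Ha; apply: W_superpos => //; first by move=> i; left.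
exact: weighting_wsuperpos_proj (W_weighting Wu) Ha.
Qed.

(* The alternative rho = 0 is needed: Omega may have no l-ary weightings at all. *)
Lemma supp_dominating_weighting l (s : seq (op D l)) (S : R) :
  {in s, forall f, supp W f} ->
  exists rho : op D l -> R,
    [/\ rho = (fun _ => 0) \/ W l rho,
        forall y, ~ is_proj y -> 0 <= rho y
      & {in s, forall f, ~ is_proj f -> S < rho f}].
Proof.
elim: s => [_|f s IHs Hs]; first by exists (fun _ => 0); split => //; left.
have [|rho [Wrho Hrho Hdom]] := IHs; first by move=> y ys; apply: Hs; rewrite inE ys orbT.
have [Hf|Hf] := classic (is_proj f).
  by exists rho; split => // y; rewrite inE => /orP[/eqP -> //|]; exact: Hdom.
have [[j Ef]|[mu [Wmu mu_f]]] := Hs f (mem_head _ _); first by case: Hf; exists j.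
pose t := (`|S| + 1) / mu f.
have t_ge0 : 0 <= t by rewrite divr_ge0 // ?ltW // ltr_wpDl.
have Htf : t * mu f = `|S| + 1 by rewrite mulfVK // gt_eqF.
have HS : S <= `|S| := ler_norm S.
have Ht_ge0 y : ~ is_proj y -> 0 <= t * mu y.
  by move=> Hy; rewrite mulr_ge0 // (weighting_ge0 (W_weighting Wmu) Hy).
exists (fun y => rho y + t * mu y); split.
- case: Wrho => [->|Wrho]; right; last by apply: W_add => //; exact: W_scale.
  have -> : (fun y => 0 + t * mu y) = (fun y => t * mu y).
    by apply: functional_extensionality => y; rewrite add0r.
  exact: W_scale.
- by move=> y Hy; rewrite addr_ge0 // ?Hrho ?Ht_ge0.
- move=> y; rewrite inE => /orP[/eqP -> _|ys Hy].
    by rewrite Htf; have := Hrho _ Hf; lra.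
  by have := Hdom _ ys Hy; have := Ht_ge0 _ Hy; lra.
Qed.

Lemma W_wsuperpos_add k l (w : op D k -> R) (g : 'I_k -> op D l) (rho : op D l -> R) :
  W k w -> rho = (fun _ => 0) \/ W l rho -> (forall i, supp W (g i)) ->
  is_weighting (fun y => wsuperpos w g y + rho y) ->
  W l (fun y => wsuperpos w g y + rho y).
Proof.
move=> Ww Wrho Hg Hlam.
pose lft : 'I_k -> op D (k + l) := fun i => proj D (lshift l i).
pose rgt : 'I_l -> op D (k + l) := fun j => proj D (rshift k j).
pose h : 'I_(k + l) -> op D l :=
  fun m => match split m with inl i => g i | inr j => proj D j end.
pose nu := fun x => wsuperpos w lft x + wsuperpos rho rgt x.
have Wnu : W (k + l) nu.
  have Wlft : W (k + l) (wsuperpos w lft).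
    by apply: W_wsuperpos_proj => // i; exists (lshift l i).
  have Wrgt : W l rho -> W (k + l) (wsuperpos rho rgt).
    by move=> Wr; apply: W_wsuperpos_proj => // j; exists (rshift k j).
  case: Wrho => [Erho|Wr]; last exact: W_add (Wrgt Wr).
  rewrite /nu Erho wsuperpos0.
  suff -> : (fun x => wsuperpos w lft x + 0) = wsuperpos w lft by [].
  by apply: functional_extensionality => x; rewrite addr0.
have Enu : wsuperpos nu h = fun y => wsuperpos w g y + rho y.
  rewrite /nu wsuperposD !wsuperposA.
  have -> : (fun i => superpos (lft i) h) = g.
    by apply: functional_extensionality => i; rewrite superpos_proj /h (unsplitK (inl i)).
  have -> : (fun j => superpos (rgt j) h) = (fun j => proj D j).
    by apply: functional_extensionality => j; rewrite superpos_proj /h (unsplitK (inr j)).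
  by rewrite wsuperpos_id.
rewrite -Enu; apply: W_superpos => //; last by rewrite Enu.
by move=> m; rewrite /h; case: (split m) => [i|j]; [exact: Hg | left; exists j].
Qed.

Lemma supp_superpos k l (f : op D k) (g : 'I_k -> op D l) :
  supp W f -> (forall i, supp W (g i)) -> supp W (superpos f g).
Proof.
case=> [[i ->] Hg|[w [Ww w_f]] Hg]; first by rewrite superpos_proj.
have [Hfg|Hfg] := classic (is_proj (superpos f g)); first by left.
have Hcodom : {in codom g, forall y, supp W y} by move=> y /codomP[i ->].
have [rho [Wrho Hrho Hdom]] :=
  supp_dominating_weighting (\sum_(f0 : op D k) `|w f0|) Hcodom.
have Hdom' i : ~ is_proj (g i) -> \sum_(f0 : op D k) `|w f0| < rho (g i).
  exact: Hdom (codom_f g i).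
have Hrho0 : \sum_(y : op D l) rho y = 0.
  by case: Wrho => [->|/W_weighting []//]; rewrite big1.
right; exists (fun y => wsuperpos w g y + rho y); split.
  apply: W_wsuperpos_add => //.
  exact: dominated_wsuperpos_weighting (W_weighting Ww) Hrho Hdom' Hrho0.
exact: (dominated_wsuperpos_pos (W_weighting Ww) Hrho Hdom' w_f Hfg).
Qed.

End WeightedClone.
End Superposition.

Theorem lemma4 (D : finType) (HD : (1 < #|D|)%N) (W : wset D) :
  is_weighted_clone W -> is_clone (supp W).
Proof.
move=> [_ [W_weighting [W_scale W_add W_superpos _]]]; split.
  by move=> k i; left; exists i.
by move=> k l f g; apply: supp_superpos.
Qed.
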